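(* Let $(\Omega,\mathcal{F},P)=([0,1],\mathcal{B}([0,1]),\lambda)$ with $\lambda$ Lebesgue measure. Let $(\varepsilon_n)\subset(0,1)$ with $\varepsilon_n\to0$, and let $S^n_1(\omega)=-\frac{1}{\sqrt{\omega}}$ for $\omega\in[0,\varepsilon_n)$ and $S^n_1(\omega)=\frac{1}{(1-\omega)^{1/(n+1)}}$ for $\omega\in[\varepsilon_n,1]$, where $(\varepsilon_n)$ is chosen such that $E[S^n_1]=1$ for all $n$. Then there is no probability measure $Q\sim\lambda$ such that $E_Q[S^n_1]=0$ for all $n\in\mathbb{N}$. *)

From HB Require Import structures.
From mathcomp Require Import all_boot all_order all_algebra.
From mathcomp Require Import all_classical all_reals all_analysis.
Set Implicit Arguments. Unset Strict Implicit. Unset Printing Implicit Defensive.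
Import Order.TTheory GRing.Theory Num.Theory.
Local Open Scope ring_scope.

(* The random variable S^n_1 on Omega = [0,1], given the sequence eps:
   S^n_1(w) = -1/sqrt(w)             for w in [0, eps n)
   S^n_1(w) = 1/(1-w)^(1/(n+1))      for w in [eps n, 1].
   (At the two null points w = 0 and w = 1 the paper's formula is 1/0; here
   the MathComp convention 0^-1 = 0 applies, irrelevant up to null sets.) *)
Definition S1 (R : realType) (eps : nat -> R) (n : nat) (w : R) : R :=
  if w < eps n then - (Num.sqrt w)^-1
  else ((1 - w) `^ (n.+1%:R)^-1)^-1.

(* Write g w := 1 / sqrt w.  The negative part of S^n_1 is g on [0, eps n) and
   S^n_1 >= 1 on [eps n, 1).  If E_Q[S^n_1] = 0, the integrals of the positive
   and negative parts of S^n_1 under Q are equal and finite; for n = 1 this makes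
   g Q-integrable on [0, eps 1), so by dominated convergence
   h_n := g 1_[0, eps n) 1_[0, eps 1) has E_Q[h_n] -> 0.  But (S^n_1)^- <= h_n
   and (S^n_1)^+ + h_n >= 1 off {0, 1} once eps n < eps 1, so that
   1 <= E_Q[(S^n_1)^+] + E_Q[h_n] = E_Q[(S^n_1)^-] + E_Q[h_n] <= 2 E_Q[h_n]. *)

From HB Require Import structures.
From mathcomp Require Import all_boot all_order all_algebra.
From mathcomp Require Import all_classical all_reals all_analysis.
From mathcomp Require Import measurable_realfun.
Import Order.TTheory GRing.Theory Num.Theory.
Local Open Scope classical_set_scope.
Local Open Scope ring_scope.

Section zero_integral.
Local Open Scope ereal_scope.
Context {d} {T : measurableType d} {R : realType} (mu : {measure set T -> \bar R}).
Variables (D : set T) (mD : measurable D).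

Lemma integral_eq0_funepos_funeneg (f : T -> \bar R) :
  \int[mu]_(x in D) f x = 0 ->
  \int[mu]_(x in D) f^\- x < +oo /\
  \int[mu]_(x in D) f^\+ x = \int[mu]_(x in D) f^\- x.
Proof.
rewrite integralE.
have : 0 <= \int[mu]_(x in D) f^\+ x by apply: integral_ge0 => x _.
have : 0 <= \int[mu]_(x in D) f^\- x by apply: integral_ge0 => x _.
case: (\int[mu]_(x in D) f^\+ x) => [a||]; case: (\int[mu]_(x in D) f^\- x) => [b||] //=.
by move=> _ _ [/eqP]; rewrite subr_eq0 => /eqP ->; rewrite ltry.
Qed.

Lemma integral_eq0_integrable_funeneg (f : T -> \bar R) :
  measurable_fun D f -> \int[mu]_(x in D) f x = 0 -> mu.-integrable D f^\-.
Proof.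
move=> mf /integral_eq0_funepos_funeneg[fin _]; apply/integrableP; split.
  exact: measurable_funeneg.
by under eq_integral => x _ do rewrite gee0_abs //.
Qed.

Lemma integral_eq0_lower_bound (f h : T -> \bar R) :
  mu D = 1 -> measurable_fun D f -> measurable_fun D h ->
  (forall x, D x -> 0 <= h x) -> \int[mu]_(x in D) f x = 0 ->
  (forall x, D x -> f^\- x <= h x) ->
  (\forall x \ae mu, D x -> 1 <= f^\+ x + h x) ->
  1 <= \int[mu]_(x in D) h x + \int[mu]_(x in D) h x.
Proof.
move=> muD mf mh h0 /integral_eq0_funepos_funeneg[_ fE] fh fh1.
have mfp := measurable_funepos mf.
have -> : 1 = \int[mu]_(x in D) cst 1 x by rewrite integral_cst // mul1e muD.
apply: (@le_trans _ _ (\int[mu]_(x in D) (f^\+ x + h x))).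
  apply: ae_ge0_le_integral => //; last exact: emeasurable_funD.
  by move=> x Dx; rewrite adde_ge0 ?h0.
rewrite ge0_integralD // fE leeD2r //.
by apply: ge0_le_integral => //; exact: measurable_funeneg.
Qed.

Lemma integral_mul_indic_cvg0 (f : T -> \bar R) (A : nat -> set T) :
  (forall n, measurable (A n)) -> mu.-integrable D f ->
  (forall x, D x -> f x != 0 -> \forall n \near \oo, ~ A n x) ->
  \int[mu]_(x in D) (f x * (\1_(A n) x)%:E) @[n --> \oo] --> 0.
Proof.
move=> mA intf fA.
have mf := measurable_int mu intf.
pose fA_ n x := f x * (\1_(A n) x)%:E.
have mfA n : measurable_fun D (fA_ n).
  apply: emeasurable_funM => //.
  by apply/measurable_EFinP; exact: measurable_indic.
have fA_cvg0 : \forall x \ae mu, D x -> fA_ n x @[n --> \oo] --> cst 0 x.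
  apply: aeW => x Dx; apply: cvg_near_cst; rewrite /fA_.
  have [->|f0] := eqVneq (f x) 0; first by apply: nearW => n; rewrite mul0e.
  by apply: filterS (fA x Dx f0) => n nA; rewrite indicE memNset // mule0.
have fA_dom : \forall x \ae mu, forall n, D x -> `|fA_ n x| <= (abse \o f) x.
  apply: aeW => x n Dx /=; rewrite /fA_ abseM -[leRHS]mule1.
  by rewrite lee_wpmul2l //= lee_fin ger0_norm ?indic_le1.
have [_ _] := dominated_convergence mD mfA (measurable_cst _) fA_cvg0
  (integrable_abse intf) fA_dom.
by rewrite integral0.
Qed.
End zero_integral.

Lemma ae_itvcc (R : realType) (mu : {measure set (measurableTypeR R) -> \bar R})
    (a b : R) (P : R -> Prop) :
  mu [set a] = 0%E -> mu [set b] = 0%E -> (forall w, a < w < b -> P w) ->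
  \forall w \ae mu, `[a, b]%classic w -> P w.
Proof.
move=> mua mub abP.
have Nab : mu.-negligible ([set a] `|` [set b]).
  by apply: negligibleU; apply/negligibleP.
apply: negligibleS Nab => w /= Pw.
have [->|wa] := eqVneq w a; first by left.
have [->|wb] := eqVneq w b; first by right.
exfalso; apply: Pw; rewrite /= in_itv /= => /andP[le_aw le_wb]; apply: abP.
by rewrite !lt_neqAle le_aw le_wb eq_sym wa wb.
Qed.

Lemma invsqrtr_ge1 (R : rcfType) (w : R) : 0 < w <= 1 -> 1 <= (Num.sqrt w)^-1.
Proof.
by case/andP=> w0 w1; rewrite invf_ge1 ?sqrtr_gt0 // -sqrtr1 ler_sqrt.
Qed.

Local Notation S1e eps n := (fun w => (S1 eps n w)%:E).

Section S1.
Variables (R : realType) (eps : nat -> R).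

Lemma S1_funeneg n (w : R) :
  ((S1e eps n)^\- w = (if w < eps n then (Num.sqrt w)^-1 else 0)%:E)%E.
Proof.
rewrite funenegE -EFinN /S1; case: ifP => _.
  by rewrite opprK -EFin_max max_l // invr_ge0 sqrtr_ge0.
by rewrite -EFin_max max_r // oppr_le0 invr_ge0 powR_ge0.
Qed.

Lemma S1_funeneg_neq0 n (w : R) : ((S1e eps n)^\- w != 0)%E -> 0 < w.
Proof.
rewrite S1_funeneg; apply: contraTT; rewrite -leNgt negbK => w0.
by rewrite ler0_sqrtr // invr0 if_same.
Qed.

Lemma S1_funeneg_le m n (w : R) : eps n <= eps m ->
  ((S1e eps n)^\- w <= (S1e eps m)^\- w * (\1_`]-oo, eps n[ w)%:E)%E.
Proof.
move=> le_nm; rewrite !S1_funeneg indicE mem_setE in_itv /=.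
by case: (ltP w (eps n)) => wn; rewrite ?(lt_le_trans wn le_nm) ?mule1 ?mule0.
Qed.

Lemma S1_ge1 n (w : R) : 0 <= w < 1 -> eps n <= w -> 1 <= S1 eps n w.
Proof.
case/andP=> w0 w1; rewrite /S1 leNgt => /negbTE ->.
have w10 : 0 < 1 - w <= 1 by rewrite subr_gt0 w1 gerBl.
rewrite invf_ge1 ?powR_gt0 //; last by case/andP: w10.
by rewrite -[leRHS](powRr0 (1 - w)) ger_powR // invr_ge0.
Qed.

Lemma S1_funepos_add_ge1 m n (w : R) : 0 < w < 1 -> eps n <= eps m ->
  (1 <= (S1e eps n)^\+ w + (S1e eps m)^\- w * (\1_`]-oo, eps n[ w)%:E)%E.
Proof.
case/andP=> w0 w1 le_nm.
rewrite S1_funeneg funeposE indicE mem_setE in_itv /= -EFin_max.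
case: (ltP w (eps n)) => wn.
  rewrite (lt_le_trans wn le_nm) mule1 lee_paddl ?lee_fin ?le_max ?lexx ?orbT //.
  by rewrite invsqrtr_ge1 // w0 ltW.
by rewrite mule0 adde0 lee_fin le_max S1_ge1 // ltW.
Qed.

Lemma measurable_S1 n : measurable_fun setT (S1 eps n).
Proof.
have -> : S1 eps n = fun w => if w < eps n then - ((Num.sqrt w) `^ (-1))
   else (1 - w) `^ (- (n.+1%:R^-1)).
  by apply/funext => w; rewrite /S1 powR_inv1 ?sqrtr_ge0 // powRN.
apply: measurable_fun_ifT.
- apply: (measurable_fun_ltr (f := id)) => //; exact: measurable_cst.
- apply: measurable_funN; apply: measurableT_comp (measurable_powR _) _.
  apply: continuous_measurable_fun; exact: sqrt_continuous.
- by apply: measurableT_comp (measurable_powR _) _; apply: measurable_funB.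
Qed.

Lemma S1_funeneg_trunc_cvg0 (mu : {measure set (measurableTypeR R) -> \bar R})
    (D : set R) m : measurable D -> eps @ \oo --> 0 ->
  mu.-integrable D (S1e eps m)^\-%E ->
  (\int[mu]_(w in D) ((S1e eps m)^\- w * (\1_`]-oo, eps n[ w)%:E))%E
    @[n --> \oo] --> 0%E.
Proof.
move=> mD eps0 intS; apply: integral_mul_indic_cvg0 => //.
move=> w _ /S1_funeneg_neq0 w_gt0; apply: filterS (cvgr_lt 0 eps0 w w_gt0).
by move=> n en_lt; rewrite /= in_itv /= => /(lt_trans en_lt); rewrite ltxx.
Qed.
End S1.

Theorem lemma6p3 (R : realType) (eps : nat -> R)
  (heps01 : forall n : nat, (0 < n)%N -> 0 < eps n < 1)
  (heps0 : eps @ \oo --> 0)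
  (hE : forall n : nat, (0 < n)%N ->
     (\int[lebesgue_measure]_(w in `[0%R, 1%R]) (S1 eps n w)%:E = 1)%E) :
  ~ exists Q : probability (measurableTypeR R) R,
      Q `[0%R, 1%R]%classic = 1%E /\
      (forall A : set R, measurable A -> A `<=` `[0%R, 1%R]%classic ->
         (Q A = 0%E <-> lebesgue_measure A = 0%E)) /\
      (forall n : nat, (0 < n)%N ->
         (\int[Q]_(w in `[0%R, 1%R]) (S1 eps n w)%:E = 0)%E).
Proof.
move=> [Q [QD [Qnull QS0]]].
set D : set R := `[0%R, 1%R]%classic.
have mD : measurable D by exact: measurable_itv.
have mS n : measurable_fun (T := measurableTypeR R) D (S1e eps n).
  by apply/measurable_EFinP; apply: measurable_funTS; exact: measurable_S1.
have Q_set1 x : D x -> Q [set x] = 0%E.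
  move=> Dx; apply/(Qnull _ (measurable_set1 x)); last exact: lebesgue_measure_set1.
  by move=> y ->.
pose h n w := ((S1e eps 1%N)^\- w * (\1_`]-oo, eps n[ w)%:E)%E.
have h_cvg0 : (\int[Q]_(w in D) h n w)%E @[n --> \oo] --> 0%E.
  apply: S1_funeneg_trunc_cvg0 => //.
  exact: integral_eq0_integrable_funeneg (mS 1%N) (QS0 1%N isT).
have /andP[eps1_gt0 _] := heps01 1%N isT.
near \oo => n.
have n0 : (0 < n)%N by near: n; exists 1%N.
have eps_lt : eps n < eps 1%N by near: n; exact: cvgr_lt 0 heps0 _ eps1_gt0.
have h_lt : (\int[Q]_(w in D) h n w < (1 / 2)%:E)%E.
  near: n; apply: (h_cvg0 (fun e => e < (1 / 2)%:E)%E); apply: open_ereal_lt'.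
  by rewrite lte_fin divr_gt0.
suff : (1 <= \int[Q]_(w in D) h n w + \int[Q]_(w in D) h n w)%E.
  by rewrite leNgt {1}(splitr 1) EFinD (lteD h_lt h_lt).
apply: integral_eq0_lower_bound QD (mS n) _ _ (QS0 n n0) _ _ => //.
- apply: emeasurable_funM; first exact: measurable_funeneg.
  by apply/measurable_EFinP; exact: measurable_indic.
- by move=> w _; rewrite mule_ge0 ?lee_fin.
- by move=> w _; exact: S1_funeneg_le (ltW eps_lt).
- apply: ae_itvcc => [||w w01]; last exact: S1_funepos_add_ge1 (ltW eps_lt).
  all: by apply: Q_set1; rewrite /D /= in_itv /= lexx ler01.
Unshelve. all: by end_near.
Qed.
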